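(* Let $E_1,\dots,E_d\subset\{1,\dots,l\}$ and assume that for every transition $j\to k$ of the model the function $V^{jk}$ is strictly increasing. Then, for $0\le t_1<t_2$, the matrix $\mathbf V_{\mathrm{all}}(t_2)-\mathbf V_{\mathrm{all}}(t_1)$ is invertible if and only if the vectors $\Psi_{E_1},\dots,\Psi_{E_d}$ are linearly independent.
   Context: In a Markov multi-state model on states $\{0,\dots,l\}$ with transition intensities $\lambda^{jk}$, a transition of the model is a pair $(j,k)$, $j\neq k$, with $\lambda^{jk}\not\equiv0$; let $w_1,\dots,w_{n_{\mathrm{trans}}}$ enumerate them. A transition $(j,k)$ contributes to $E\subset\{1,\dots,l\}$ if $j\notin E$ and $k\in E$. For $E$ define $\Psi_E=(\psi_{E,m})_{m=1}^{n_{\mathrm{trans}}}\in\{0,1\}^{n_{\mathrm{trans}}}$ with $\psi_{E,m}=1$ iff $w_m$ contributes to $E$. Data setting: $X$ the Markov process with $X(0)=0$, $Z\in\{0,1\}$ treatment group, $C(t)=\tilde C\wedge(t-R)_+$ the censoring time at calendar time $t$ ($R$ entry time, $\tilde C$ dropout time), $X$ independent of $(R,Z,\tilde C)$; $\mu^j(s)=\mathbb E[Z\mathbb 1\{X(s-)=j\}\mathbb 1\{s\le C(t)\}]/\mathbb E[\mathbb 1\{X(s-)=j\}\mathbb 1\{s\le C(t)\}]$, assumed not to depend on $t$; $q^{jk}(s)$ deterministic weight functions. Define $V^{jk}(t)=\int_{[0,t]}q^{jk}(s)^2\lambda^{jk}(s)\mathbb E[\mathbb 1\{X(s)=j\}\mathbb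 1\{s\le C(t)\}(Z-\mu^j(s))^2]ds$ and the $d\times d$ matrix $\mathbf V_{\mathrm{all}}(t)$ with entries $V_{\mathrm{all},c_1c_2}(t)=\sum_{k\in E_{c_1}\cap E_{c_2}}\sum_{j\notin E_{c_1}\cup E_{c_2}}V^{jk}(t)$ (sum over transitions of the model). *)

From HB Require Import structures.
From mathcomp Require Import all_boot all_order all_algebra.
From mathcomp Require Import boolp reals.
Set Implicit Arguments. Unset Strict Implicit. Unset Printing Implicit Defensive.
Import Order.TTheory GRing.Theory Num.Theory.
Local Open Scope ring_scope.

(* States {0,...,l} are 'I_l.+1.  lam j k : R -> R is the intensity lambda^{jk}. *)

Definition transitions (R : realType) (l : nat)
  (lam : 'I_l.+1 -> 'I_l.+1 -> R -> R) : {set 'I_l.+1 * 'I_l.+1} :=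
  [set p | (p.1 != p.2) && `[< exists s : R, lam p.1 p.2 s != 0 >]].

Definition ntrans (R : realType) (l : nat) (lam : 'I_l.+1 -> 'I_l.+1 -> R -> R) : nat :=
  #|transitions lam|.

Definition w (R : realType) (l : nat) (lam : 'I_l.+1 -> 'I_l.+1 -> R -> R)
  (m : 'I_(ntrans lam)) : 'I_l.+1 * 'I_l.+1 := enum_val m.

Definition contributes (l : nat) (p : 'I_l.+1 * 'I_l.+1) (E : {set 'I_l.+1}) : bool :=
  (p.1 \notin E) && (p.2 \in E).

Definition Psi (R : realType) (l : nat) (lam : 'I_l.+1 -> 'I_l.+1 -> R -> R)
  (E : {set 'I_l.+1}) : 'rV[R]_(ntrans lam) :=
  \row_m (contributes (w m) E)%:R.

Definition Psi_mx (R : realType) (l d : nat) (lam : 'I_l.+1 -> 'I_l.+1 -> R -> R)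
  (E : 'I_d -> {set 'I_l.+1}) : 'M[R]_(d, ntrans lam) :=
  \matrix_(c, m) Psi lam (E c) 0 m.

Definition Vall (R : realType) (l d : nat) (lam : 'I_l.+1 -> 'I_l.+1 -> R -> R)
  (V : 'I_l.+1 -> 'I_l.+1 -> R -> R) (E : 'I_d -> {set 'I_l.+1}) (t : R) : 'M[R]_d :=
  \matrix_(c1, c2)
    \sum_(p in transitions lam |
           (p.2 \in E c1 :&: E c2) && (p.1 \notin E c1 :|: E c2)) V p.1 p.2 t.

(* Write V(t) for the row of the V^{jk}(t) indexed by the transitions of the
   model and Psi for the matrix with rows Psi_{E_1}, ..., Psi_{E_d}.  A
   transition contributes to both E_c1 and E_c2 exactly when it enters
   E_c1 :&: E_c2 from outside E_c1 :|: E_c2, so V_all(t) is the Gram matrix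
   Psi diag(V(t)) Psi^T.  Hence V_all(t2) - V_all(t1) = Psi D Psi^T where D is
   diagonal with positive entries, and such a matrix is invertible iff the rows
   of Psi are independent: x Psi D Psi^T x^T = 0 forces x Psi = 0. *)

From HB Require Import structures.
From mathcomp Require Import all_boot all_order all_algebra.
From mathcomp Require Import boolp reals.
Set Implicit Arguments. Unset Strict Implicit. Unset Printing Implicit Defensive.
Import Order.TTheory GRing.Theory Num.Theory.
Local Open Scope ring_scope.

Section PositiveDiagonalGram.

Variable R : realFieldType.

Lemma diag_form_eq0 n (D y : 'rV[R]_n) :
  (forall i, 0 < D 0 i) -> y *m diag_mx D *m y^T = 0 -> y = 0.
Proof.
move=> D_gt0 /matrixP/(_ 0 0); rewrite mul_mx_diag !mxE.
have sq_term i : y 0 i * D 0 i * y^T i 0 = y 0 i ^+ 2 * D 0 i.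
  by rewrite mxE mulrAC -expr2.
under eq_bigr => i _ do rewrite mxE sq_term.
have term_ge0 i : true -> 0 <= y 0 i ^+ 2 * D 0 i.
  by move=> _; rewrite mulr_ge0 ?sqr_ge0 ?ltW.
move=> /(psumr_eq0P term_ge0) term0; apply/rowP => i; rewrite mxE.
have /eqP := term0 i isT.
by rewrite mulf_eq0 sqrf_eq0 (gt_eqF (D_gt0 i)) orbF => /eqP.
Qed.

Lemma unitmx_gram_diag d n (A : 'M[R]_(d, n)) (D : 'rV[R]_n) :
  (forall i, 0 < D 0 i) -> (A *m diag_mx D *m A^T \in unitmx) = row_free A.
Proof.
move=> D_gt0; rewrite -row_free_unit; apply/idP/idP => [freeG | freeA].
  apply: inj_row_free => x xA0; apply: (row_free_inj freeG).
  by rewrite /= mul0mx !mulmxA xA0 !mul0mx.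
apply: inj_row_free => x xG0; apply: (row_free_inj freeA); rewrite /= mul0mx.
apply: (@diag_form_eq0 n D (x *m A) D_gt0).
by rewrite trmx_mul !mulmxA -(mulmxA x) -(mulmxA x) xG0 mul0mx.
Qed.

End PositiveDiagonalGram.

Lemma contributes_both l (p : 'I_l.+1 * 'I_l.+1) (E1 E2 : {set 'I_l.+1}) :
  contributes p E1 && contributes p E2 = (p.2 \in E1 :&: E2) && (p.1 \notin E1 :|: E2).
Proof.
rewrite /contributes !inE negb_or.
by case: (p.1 \in E1); case: (p.1 \in E2); case: (p.2 \in E1); case: (p.2 \in E2).
Qed.

Definition Vrow (R : realType) l (lam V : 'I_l.+1 -> 'I_l.+1 -> R -> R) (t : R) :
  'rV[R]_(ntrans lam) :=
  \row_m V (w m).1 (w m).2 t.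

Lemma Vall_gram (R : realType) l d (lam V : 'I_l.+1 -> 'I_l.+1 -> R -> R)
    (E : 'I_d -> {set 'I_l.+1}) (t : R) :
  Vall lam V E t = Psi_mx lam E *m diag_mx (Vrow lam V t) *m (Psi_mx lam E)^T.
Proof.
apply/matrixP => c1 c2; rewrite mul_mx_diag !mxE big_mkcondr /= big_enum_val /=.
apply: eq_bigr => m _; rewrite !mxE -contributes_both.
case: (contributes _ (E c1)); case: (contributes _ (E c2));
  by rewrite ?mul0r ?mulr0 ?mul1r ?mulr1.
Qed.

Theorem lemma3 (R : realType) (l d : nat)
  (lam : 'I_l.+1 -> 'I_l.+1 -> R -> R)
  (V : 'I_l.+1 -> 'I_l.+1 -> R -> R)
  (E : 'I_d -> {set 'I_l.+1})
  (hE : forall c, ord0 \notin E c)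
  (hV : forall p, p \in transitions lam ->
          forall s u : R, 0 <= s -> s < u -> V p.1 p.2 s < V p.1 p.2 u)
  (t1 t2 : R) (ht1 : 0 <= t1) (ht12 : t1 < t2) :
  (Vall lam V E t2 - Vall lam V E t1 \in unitmx) = row_free (Psi_mx lam E).
Proof.
rewrite !Vall_gram -mulmxBl -mulmxBr -linearB /=.
apply: unitmx_gram_diag => m; rewrite !mxE subr_gt0.
exact: hV (enum_valP m) t1 t2 ht1 ht12.
Qed.
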